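(* For every integer $m>1$ there exists a finite group $G$ with $s(G) > m\,\Gamma_e(G)$.
   Context: For a finite group $G$, $s(G)$ is the sum of all entries of its complex character table and $\Gamma_e(G)$ is the sum of the degrees of its irreducible complex characters. *)

From HB Require Import structures.
From mathcomp Require Import all_boot all_order all_algebra all_fingroup all_solvable all_field all_character.
Set Implicit Arguments. Unset Strict Implicit. Unset Printing Implicit Defensive.
Import Order.TTheory GRing.Theory Num.Theory.
Local Open Scope ring_scope.

Definition char_table_sum (gT : finGroupType) (G : {group gT}) : algC :=
  \sum_(i : Iirr G) \sum_(xG in classes G) 'chi[G]_i (repr xG).

Definition gamma_e (gT : finGroupType) (G : {group gT}) : algC :=
  \sum_(i : Iirr G) 'chi[G]_i 1%g.

From HB Require Import structures.
From mathcomp Require Import all_boot all_order all_algebra all_fingroup.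
From mathcomp Require Import all_solvable all_field all_character.
From mathcomp Require Import zify.

Set Implicit Arguments.
Unset Strict Implicit.
Unset Printing Implicit Defensive.

Import Order.TTheory GRing.Theory Num.Theory.
Local Open Scope group_scope.
Local Open Scope ring_scope.

(* If G' <= Z(G), then every centraliser C_G(h) contains G', hence is normal
   with abelian quotient, and for such a normal H the irreducible characters
   summed over H give |H| Gamma_e(G/H) = |H| |G:H| = |G|.  Counting commuting
   pairs, |G| s(G) = sum_(h in G) sum_(g in C_G(h)) sum_chi chi(g) = |G|^2, so
   s(G) = |G|.  For an extraspecial p-group S this applies, and moreover the
   nonlinear irreducible degrees divide |S|, so are at least p, while there
   are only |S:S'| = |S|/p linear characters; hence
   p Gamma_e(S) <= |S| + (p - 1)|S|/p < 2|S|.  With S = p^{1+2} and p > 2m we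
   get m Gamma_e(S) < |S| = s(S). *)

Section ClassSums.
Variables (gT : finGroupType) (G : {group gT}).

Lemma card_cent1_class x : (#|'C_G[x]| * #|x ^: G|)%N = #|G|.
Proof. by rewrite -index_cent1 Lagrange ?subsetIl. Qed.

Lemma card_cent1J x y : y \in G -> #|'C_G[x ^ y]%g| = #|'C_G[x]|.
Proof.
move=> Gy; have cl_gt0 : (0 < #|x ^: G|)%N.
  by rewrite card_gt0; apply/set0Pn; exists x; apply: class_refl.
apply/eqP; rewrite -(eqn_pmul2r cl_gt0) -{1}(classGidl x Gy).
by rewrite !card_cent1_class.
Qed.

Lemma sum_classes_cent1 (F : gT -> algC) :
    {in G &, forall g h, F (g ^ h)%g = F g} ->
  #|G|%:R * \sum_(xG in classes G) F (repr xG) =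
    \sum_(g in G) #|'C_G[g]|%:R * F g.
Proof.
move=> FJ; rewrite mulr_sumr [RHS]sum_by_classes => [|g h Gg Gh]; last first.
  by rewrite card_cent1J ?FJ.
apply: eq_bigr => xG /repr_classesP[_ defxG].
by rewrite mulrA -natrM mulnC {3}defxG card_cent1_class.
Qed.

Lemma sum_card_cent1 (F : gT -> algC) :
  \sum_(g in G) #|'C_G[g]|%:R * F g = \sum_(h in G) \sum_(g in 'C_G[h]) F g.
Proof.
under eq_bigr => g _ do rewrite mulr_natl -[_ *+ _]sumr_const.
rewrite (exchange_big_dep (mem G)) /= => [|g h _ /setIP[]//].
apply: eq_bigr => h Gh; apply: eq_bigl => g.
by rewrite !in_setI cent1C Gh.
Qed.

Lemma center_sub_cent1 h : h \in G -> 'Z(G) \subset 'C_G[h].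
Proof.
move=> Gh; apply/subsetP => z /centerP[Gz cGz]; apply/subcent1P; split => //.
by apply: commute_sym; apply: cGz.
Qed.

End ClassSums.

Lemma gamma_e_abelian (gT : finGroupType) (G : {group gT}) :
  abelian G -> gamma_e G = #|G|%:R.
Proof.
move=> cGG; rewrite /gamma_e (eq_bigr (fun=> 1)) => [|i _]; last first.
  by rewrite lin_char1 //; apply/char_abelianP.
rewrite sumr_const card_ord NirrE.
by move: cGG; rewrite card_classes_abelian => /eqP ->.
Qed.

Section IrrSums.
Variables (gT : finGroupType) (G : {group gT}).

Lemma sum_cfdot_irr k : \sum_i '['chi[G]_i, 'chi_k] = 1.
Proof.
rewrite (bigD1 k) //= cfdot_irr eqxx big1 ?addr0 // => i /negPf ik.
by rewrite cfdot_irr ik.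
Qed.

Lemma cfuni_cfMod_reg (H : {group gT}) :
  H <| G -> '1_H = #|(G / H)%g|%:R^-1 *: (cfReg (G / H)%g %% H)%CF.
Proof.
move=> nsHG; apply/cfun_inP => x Gx.
rewrite cfunE cfuniE // cfModE // cfRegE.
have nHx : x \in 'N(H) := subsetP (normal_norm nsHG) x Gx.
have -> : (coset H x == 1)%g = (x \in H).
  by apply/eqP/idP => [/(coset_idr nHx) | /coset_id].
by case: (x \in H); rewrite ?mulr0n ?mulr0 // mulr1n mulVf ?neq0CG.
Qed.

Lemma sum_cfdot_irr_cfuni (H : {group gT}) :
  H <| G ->
  \sum_i '['chi[G]_i, '1_H] = gamma_e (G / H)%g / #|(G / H)%g|%:R.
Proof.
move=> nsHG; rewrite cfuni_cfMod_reg // cfReg_sum.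
under eq_bigr do rewrite cfdotZr raddf_sum cfdot_sumr.
rewrite -mulr_sumr exchange_big /= fmorphV rmorph_nat mulrC; congr (_ * _).
rewrite /gamma_e; apply: eq_bigr => j _; rewrite linearZ /= -mod_IirrE //.
under eq_bigr do rewrite cfdotZr.
by rewrite -mulr_sumr sum_cfdot_irr mulr1 conj_natr ?Cnat_irr1.
Qed.

Lemma sum_irr_normal (H : {group gT}) :
  H <| G -> \sum_(g in H) \sum_i 'chi[G]_i g = #|H|%:R * gamma_e (G / H)%g.
Proof.
move=> nsHG.
have sumH i : \sum_(g in H) 'chi[G]_i g = #|G|%:R * '['chi_i, '1_H].
  rewrite (cfdotEr _ (cfuni_on G H)) mulVKf ?neq0CG //.
  by apply: eq_bigr => g Hg; rewrite cfuniE // Hg conjC1 mulr1.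
rewrite exchange_big /= (eq_bigr _ (fun i _ => sumH i)) -mulr_sumr.
rewrite sum_cfdot_irr_cfuni // mulrCA [RHS]mulrC; congr (_ * _).
rewrite card_quotient ?normal_norm // -(Lagrange (normal_sub nsHG)) natrM.
by rewrite mulfK // pnatr_eq0 -lt0n indexg_gt0.
Qed.

Lemma sub_der1_sum_irr (H : {group gT}) :
  (G^`(1) \subset H)%g -> H \subset G ->
  \sum_(g in H) \sum_i 'chi[G]_i g = #|G|%:R.
Proof.
move=> sG'H sHG; have nsHG := sub_der1_normal sG'H sHG.
rewrite sum_irr_normal // gamma_e_abelian ?sub_der1_abelian // -natrM.
by rewrite card_quotient ?normal_norm // Lagrange.
Qed.

Lemma char_table_sum_class2 :
  (G^`(1) \subset 'Z(G))%g -> char_table_sum G = #|G|%:R.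
Proof.
move=> sG'Z; apply: (mulfI (neq0CG G)).
rewrite /char_table_sum exchange_big /=.
rewrite (sum_classes_cent1 (F := fun g => \sum_i 'chi[G]_i g)); last first.
  by move=> g h Gg Gh; apply: eq_bigr => i _; rewrite cfunJ.
rewrite sum_card_cent1 [RHS]mulr_natl -sumr_const; apply: eq_bigr => h Gh.
apply: sub_der1_sum_irr (subsetIl _ _).
exact: subset_trans sG'Z (center_sub_cent1 Gh).
Qed.

End IrrSums.

Definition irr_deg (gT : finGroupType) (G : {group gT}) (i : Iirr G) : nat :=
  Num.truncn ('chi[G]_i 1%g).

Section IrrDegrees.
Variables (gT : finGroupType) (G : {group gT}).
Implicit Type i : Iirr G.

Lemma irr_degE i : 'chi_i 1%g = (irr_deg i)%:R.
Proof. by rewrite truncnK ?Cnat_irr1. Qed.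

Lemma irr_deg_gt0 i : (0 < irr_deg i)%N.
Proof. by rewrite -(ltr_nat algC) -irr_degE irr1_gt0. Qed.

Lemma irr_deg_dvd i : (irr_deg i %| #|G|)%N.
Proof. by have := dvd_irr1_cardG i; rewrite irr_degE dvdC_nat. Qed.

Lemma gamma_eE : gamma_e G = (\sum_(i : Iirr G) irr_deg i)%:R.
Proof. by rewrite natr_sum; apply: eq_bigr => i _; rewrite irr_degE. Qed.

Lemma sum_irr_deg_sq : (\sum_(i : Iirr G) irr_deg i ^ 2)%N = #|G|.
Proof.
apply/eqP; rewrite -(eqr_nat algC) -irr_sum_square natr_sum.
by apply/eqP/eq_bigr => i _; rewrite natrX irr_degE.
Qed.

Lemma lin_irr_deg i : ('chi_i \is a linear_char) = (irr_deg i == 1)%N.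
Proof. by rewrite qualifE /= irr_char irr_degE pnatr_eq1. Qed.

Lemma sum_irr_deg1 :
  (\sum_(i : Iirr G) (irr_deg i == 1%N))%N = #|G : G^`(1)%g|.
Proof.
rewrite -card_lin_irr -sum1_card [RHS]big_mkcond /=.
by apply: eq_bigr => i _; rewrite inE lin_irr_deg; case: eqP.
Qed.

Lemma sum_irr_deg_le d :
    (forall i, irr_deg i != 1 -> d <= irr_deg i)%N ->
  (d * \sum_(i : Iirr G) irr_deg i
     <= #|G| + (d - 1) * #|G : G^`(1)%g|)%N.
Proof.
move=> deg_ge; rewrite -sum_irr_deg_sq -sum_irr_deg1.
rewrite !big_distrr -big_split /=; apply: leq_sum => i _.
have := irr_deg_gt0 i; have [->|/deg_ge] := eqVneq (irr_deg i) 1%N; nia.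
Qed.

Lemma pgroup_irr_deg (p : nat) i :
  p.-group G -> irr_deg i != 1 -> (p <= irr_deg i)%N.
Proof.
move=> pG deg_ne1; have deg_gt1 : (1 < irr_deg i)%N.
  by rewrite ltn_neqAle eq_sym deg_ne1 irr_deg_gt0.
have : pdiv (irr_deg i) \in (p : nat_pred).
  by apply: pnatPpi (pnat_dvd (irr_deg_dvd i) pG) _; rewrite pi_pdiv.
by rewrite inE => /eqP <-; apply: dvdn_leq (pdiv_dvd _); apply: ltnW.
Qed.

End IrrDegrees.

Section Extraspecial.
Variables (p : nat) (gT : finGroupType) (S : {group gT}).
Hypotheses (pS : p.-group S) (esS : extraspecial S).

Lemma char_table_sum_extraspecial : char_table_sum S = #|S|%:R.
Proof.
by case: esS => -[_ defS'] _; apply: char_table_sum_class2; rewrite defS'.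
Qed.

Lemma sum_irr_deg_extraspecial :
  (p * \sum_(i : Iirr S) irr_deg i < 2 * #|S|)%N.
Proof.
have p_gt1 := prime_gt1 (extraspecial_prime pS esS).
have oS' : #|S^`(1)%g| = p.
  by case: esS => -[_ ->] _; apply: card_center_extraspecial.
have oS : (p * #|S : S^`(1)%g|)%N = #|S| by rewrite -oS' Lagrange ?der_sub.
have := sum_irr_deg_le (fun i => pgroup_irr_deg (i := i) pS).
have := indexg_gt0 S S^`(1)%g; nia.
Qed.

End Extraspecial.

Theorem proposition2p9 :
  forall m : nat, (1 < m)%N ->
  exists (gT : finGroupType) (G : {group gT}),
    (m%:R : algC) * gamma_e G < char_table_sum G.
Proof.
move=> m _; have [p lt2m_p p_pr] := prime_above (2 * m).
have pS := pX1p2_pgroup p_pr; have esS := pX1p2_extraspecial p_pr.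
exists (Pextraspecial.gtype p), [set: Pextraspecial.gtype p]%G.
rewrite char_table_sum_extraspecial // gamma_eE -natrM ltr_nat.
have := sum_irr_deg_extraspecial pS esS; nia.
Qed.
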